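(* Let $\beta_0$ and $\beta_1$ be two $1$-forms on $D^2$ such that $\beta_0=\beta_1$ in a neighborhood of $\partial D^2$ and $d\beta_0=d\beta_1=\omega>0$. Then there exists a contact $1$-form $\alpha$ with Reeb vector field $R_\alpha$ on $[-1,1]\times D^2$, with coordinates $(t,x)$ where $t\in[-1,1]$ and $x\in D^2$, such that, for a small positive number $\varepsilon$: (1) $\alpha=dt+\varepsilon\beta_0$ in a neighborhood of $\{-1\}\times D^2$; (2) $\alpha=dt+\varepsilon\beta_1$ in a neighborhood of $\{1\}\times D^2$; (3) $R_\alpha$ is collinear to $\partial_t$ on $[-1,1]\times D^2$; (4) $R_\alpha=\partial_t$ in a neighborhood of $[-1,1]\times\partial D^2$.
   Context: The Reeb vector field $R_\alpha$ of a contact form $\alpha$ is defined by $d\alpha(R_\alpha,\cdot)=0$ and $\alpha(R_\alpha)=1$. A contact form on the $3$-manifold $[-1,1]\times D^2$ means $\alpha\wedge d\alpha>0$ with respect to the product orientation. *)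

From Stdlib Require Import Reals List.
From Coquelicot Require Import Coquelicot.
Open Scope R_scope.

Definition fun2 := R -> R -> R.

(* partial derivative in direction i (0 : x, otherwise : y) *)
Definition pd2 (i : nat) (f : fun2) : fun2 := fun x y =>
  match i with
  | O => Derive (fun s => f s y) x
  | _ => Derive (fun s => f x s) y
  end.

Definition ex_pd2 (i : nat) (f : fun2) (x y : R) : Prop :=
  match i with
  | O => ex_derive (fun s => f s y) x
  | _ => ex_derive (fun s => f x s) y
  end.

Fixpoint iter_pd2 (l : list nat) (f : fun2) : fun2 :=
  match l with nil => f | i :: l' => pd2 i (iter_pd2 l' f) end.

Definition smooth2 (f : fun2) : Prop :=
  forall l : list nat,
    (forall i x y, ex_pd2 i (iter_pd2 l f) x y) /\
    (forall p : R * R, continuous (fun q : R * R => iter_pd2 l f (fst q) (snd q)) p).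

Definition fun3 := R -> R -> R -> R.

(* partial derivative in direction i (0 : t, 1 : x, otherwise : y) *)
Definition pd3 (i : nat) (f : fun3) : fun3 := fun t x y =>
  match i with
  | O => Derive (fun s => f s x y) t
  | S O => Derive (fun s => f t s y) x
  | _ => Derive (fun s => f t x s) y
  end.

Definition ex_pd3 (i : nat) (f : fun3) (t x y : R) : Prop :=
  match i with
  | O => ex_derive (fun s => f s x y) t
  | S O => ex_derive (fun s => f t s y) x
  | _ => ex_derive (fun s => f t x s) y
  end.

Fixpoint iter_pd3 (l : list nat) (f : fun3) : fun3 :=
  match l with nil => f | i :: l' => pd3 i (iter_pd3 l' f) end.

Definition smooth3 (f : fun3) : Prop :=
  forall l : list nat,
    (forall i t x y, ex_pd3 i (iter_pd3 l f) t x y) /\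
    (forall p : R * (R * R),
        continuous (fun q : R * (R * R) => iter_pd3 l f (fst q) (fst (snd q)) (snd (snd q))) p).

Definition in_disk (x y : R) : Prop := x ^ 2 + y ^ 2 <= 1.
Definition in_cyl (t x y : R) : Prop := -1 <= t <= 1 /\ in_disk x y.

(* A 1-form on D^2: beta = P dx + Q dy (smooth, given on R^2).
   d beta = (dQ/dx - dP/dy) dx /\ dy ; we record its coefficient. *)
Definition dcoef2 (P Q : fun2) : fun2 := fun x y => pd2 0 Q x y - pd2 1 P x y.

(* A 1-form on [-1,1] x D^2: alpha = a dt + b dx + c dy. *)
Definition vec3 := (R * R * R)%type.

Definition form_eval (a b c : fun3) (t x y : R) (u : vec3) : R :=
  let '(u0, u1, u2) := u in a t x y * u0 + b t x y * u1 + c t x y * u2.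

Definition dform_eval (a b c : fun3) (t x y : R) (u v : vec3) : R :=
  let '(u0, u1, u2) := u in
  let '(v0, v1, v2) := v in
    (pd3 0 b t x y - pd3 1 a t x y) * (u0 * v1 - u1 * v0)
  + (pd3 0 c t x y - pd3 2 a t x y) * (u0 * v2 - u2 * v0)
  + (pd3 1 c t x y - pd3 2 b t x y) * (u1 * v2 - u2 * v1).

Definition e_t : vec3 := (1, 0, 0).
Definition e_x : vec3 := (0, 1, 0).
Definition e_y : vec3 := (0, 0, 1).

(* (alpha /\ d alpha)(d_t, d_x, d_y) *)
Definition contact_density (a b c : fun3) (t x y : R) : R :=
    form_eval a b c t x y e_t * dform_eval a b c t x y e_x e_y
  - form_eval a b c t x y e_x * dform_eval a b c t x y e_t e_y
  + form_eval a b c t x y e_y * dform_eval a b c t x y e_t e_x.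

(* alpha is a contact form on [-1,1] x D^2 (positive w.r.t. product
   orientation dt /\ dx /\ dy) *)
Definition is_contact_cyl (a b c : fun3) : Prop :=
  forall t x y, in_cyl t x y -> contact_density a b c t x y > 0.

Definition is_reeb_cyl (a b c : fun3) (Rv : R -> R -> R -> vec3) : Prop :=
  forall t x y, in_cyl t x y ->
    form_eval a b c t x y (Rv t x y) = 1 /\
    forall v : vec3, dform_eval a b c t x y (Rv t x y) v = 0.

From Stdlib Require Import Reals Lra FunctionalExtensionality Factorial.
From Coquelicot Require Import Coquelicot.
Open Scope R_scope.

(* Interpolate with a step function: [eps ((1 - chi t) beta0 + chi t beta1)] has differential
   [eps omega + eps chi'(t) dt /\ (beta1 - beta0)].  The closed form [beta1 - beta0] vanishes
   near the boundary circle, so it is [dH] for a smooth [H] vanishing there (integrate it along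
   horizontal lines after cutting it off outside the disk).  Adding [eps chi'(t) H dt] kills the
   extra term, so [alpha = (1 + eps chi' H) dt + eps ((1 - chi) beta0 + chi beta1)] has
   [d alpha = eps omega].  For small [eps] the [dt]-coefficient [a] is positive, hence
   [alpha /\ d alpha = eps a omega dt dx dy > 0] and the Reeb field is [(1/a) d_t], which is
   [d_t] wherever [H = 0]. *)

(** * Smooth functions of one variable *)

Definition smooth1 (f : R -> R) : Prop :=
  forall n, (forall t, ex_derive (Derive_n f n) t) /\ (forall t, continuous (Derive_n f n) t).

Lemma smooth1_of_stable (F : (R -> R) -> Prop) :
  (forall f, F f -> (forall t, ex_derive f t) /\ F (Derive f)) ->
  forall f, F f -> smooth1 f.
Proof.
  intros HF f Hf.
  assert (Hn : forall n, F (Derive_n f n)).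
  { induction n as [|n IH]; [exact Hf|exact (proj2 (HF _ IH))]. }
  intro n. destruct (HF _ (Hn n)) as [Hex _]. split; [exact Hex|].
  intro t. apply (@ex_derive_continuous R_AbsRing R_NormedModule), Hex.
Qed.

Inductive alg1 (G : (R -> R) -> Prop) : (R -> R) -> Prop :=
| alg1_const c : alg1 G (fun _ => c)
| alg1_gen f : G f -> alg1 G f
| alg1_plus f g : alg1 G f -> alg1 G g -> alg1 G (fun t => f t + g t)
| alg1_mult f g : alg1 G f -> alg1 G g -> alg1 G (fun t => f t * g t).

Lemma smooth1_of_alg1 (G : (R -> R) -> Prop) :
  (forall g, G g -> (forall t, ex_derive g t) /\ alg1 G (Derive g)) ->
  forall f, alg1 G f -> smooth1 f.
Proof.
  intros HG. apply smooth1_of_stable.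
  induction 1 as [c|f Hf|f g _ [Hf1 Hf2] _ [Hg1 Hg2]|f g Hf [Hf1 Hf2] Hg [Hg1 Hg2]].
  - split; [intro; apply ex_derive_const|].
    replace (Derive (fun _ => c)) with (fun _ : R => 0)
      by (apply functional_extensionality; intro; symmetry; apply Derive_const).
    apply alg1_const.
  - now apply HG.
  - split; [intro t; apply (ex_derive_plus f g t (Hf1 t) (Hg1 t))|].
    replace (Derive (fun t => f t + g t)) with (fun t => Derive f t + Derive g t)
      by (apply functional_extensionality; intro; rewrite Derive_plus; auto).
    now apply alg1_plus.
  - split; [intro t; apply (ex_derive_mult f g t (Hf1 t) (Hg1 t))|].
    replace (Derive (fun t => f t * g t))
      with (fun t => Derive f t * g t + f t * Derive g t)
      by (apply functional_extensionality; intro; rewrite Derive_mult; auto).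
    apply alg1_plus; apply alg1_mult; auto.
Qed.

Lemma Derive_n_Derive (f : R -> R) n t : Derive_n (Derive f) n t = Derive_n f (S n) t.
Proof.
  revert t; induction n as [|n IH]; intro t; simpl.
  - reflexivity.
  - apply Derive_ext, IH.
Qed.

Lemma smooth1_Derive f : smooth1 f -> smooth1 (Derive f).
Proof.
  intros H n.
  replace (Derive_n (Derive f) n) with (Derive_n f (S n))
    by (apply functional_extensionality; intro; symmetry; apply Derive_n_Derive).
  apply H.
Qed.

Lemma smooth1_ex_derive f t : smooth1 f -> ex_derive f t.
Proof. intros H. apply (proj1 (H 0%nat)). Qed.

Lemma smooth1_continuous f t : smooth1 f -> continuous f t.
Proof. intros H. apply (proj2 (H 0%nat)). Qed.

Lemma smooth1_alg1 f : alg1 smooth1 f -> smooth1 f.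
Proof.
  apply smooth1_of_alg1. intros g Hg. split.
  - intro; now apply smooth1_ex_derive.
  - now apply alg1_gen, smooth1_Derive.
Qed.

Lemma smooth1_const c : smooth1 (fun _ => c).
Proof. apply smooth1_alg1, alg1_const. Qed.

Lemma smooth1_plus f g : smooth1 f -> smooth1 g -> smooth1 (fun t => f t + g t).
Proof. intros; apply smooth1_alg1, alg1_plus; now apply alg1_gen. Qed.

Lemma smooth1_mult f g : smooth1 f -> smooth1 g -> smooth1 (fun t => f t * g t).
Proof. intros; apply smooth1_alg1, alg1_mult; now apply alg1_gen. Qed.

Lemma smooth1_scal c f : smooth1 f -> smooth1 (fun t => c * f t).
Proof. intros; apply smooth1_mult; auto using smooth1_const. Qed.

Lemma smooth1_minus f g : smooth1 f -> smooth1 g -> smooth1 (fun t => f t - g t).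
Proof.
  intros Hf Hg. replace (fun t => f t - g t) with (fun t => f t + (-1) * g t)
    by (apply functional_extensionality; intro; ring).
  now apply smooth1_plus, smooth1_scal.
Qed.

(** * A smooth step function *)

Definition flat (k : nat) (t : R) : R :=
  if Rle_dec t 0 then 0 else exp (- / t) * (/ t) ^ k.

Lemma flat_nonpos k t : t <= 0 -> flat k t = 0.
Proof. intros H; unfold flat; destruct (Rle_dec t 0); lra. Qed.

Lemma flat_pos k t : 0 < t -> flat k t = exp (- / t) * (/ t) ^ k.
Proof. intros H; unfold flat; destruct (Rle_dec t 0); lra. Qed.

Lemma flat_ge0 k t : 0 <= flat k t.
Proof.
  unfold flat; destruct (Rle_dec t 0); [lra|].
  apply Rmult_le_pos; [apply Rlt_le, exp_pos|apply pow_le; left; apply Rinv_0_lt_compat; lra].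
Qed.

Lemma flat_gt0 k t : 0 < t -> 0 < flat k t.
Proof.
  intros H; rewrite flat_pos by exact H.
  apply Rmult_lt_0_compat; [apply exp_pos|apply pow_lt, Rinv_0_lt_compat, H].
Qed.

Lemma exp_ge_pow_div_fact u n : 0 <= u -> u ^ n / INR (fact n) <= exp u.
Proof.
  intros Hu.
  apply Rle_trans with (sum_f_R0 (fun k => u ^ k / INR (fact k)) n);
    [|now apply exp_ge_taylor].
  assert (Hterm : forall k, 0 <= u ^ k / INR (fact k)).
  { intro k. apply Rmult_le_pos; [now apply pow_le|].
    left; apply Rinv_0_lt_compat, INR_fact_lt_0. }
  destruct n as [|n]; simpl; [lra|].
  pose proof (cond_pos_sum _ n Hterm). simpl in *. lra.
Qed.

Lemma flat_le_linear k t : 0 < t -> flat k t <= INR (fact (S k)) * t.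
Proof.
  intros Ht. rewrite flat_pos by exact Ht.
  set (u := / t). assert (Hu : 0 < u) by (apply Rinv_0_lt_compat; lra).
  assert (Htu : t = / u) by (unfold u; rewrite Rinv_inv; auto).
  rewrite exp_Ropp. fold u. rewrite Htu.
  pose proof (exp_ge_pow_div_fact u (S k) (Rlt_le _ _ Hu)) as He.
  pose proof (INR_fact_lt_0 (S k)). pose proof (exp_pos u).
  assert (0 < u ^ k) by (apply pow_lt; auto).
  apply (Rmult_le_reg_l (exp u * u)); [apply Rmult_lt_0_compat; auto|].
  replace (exp u * u * (/ exp u * u ^ k)) with (u * u ^ k) by (field; lra).
  replace (exp u * u * (INR (fact (S k)) * / u)) with (exp u * INR (fact (S k)))
    by (field; lra).
  apply (Rmult_le_compat_r (INR (fact (S k)))) in He; [|lra].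
  unfold Rdiv in He. rewrite Rmult_assoc, Rinv_l, Rmult_1_r in He by lra.
  simpl pow in He. lra.
Qed.

(* The derivative at [0] is [0] because [flat k h / h = flat (S k) h = O(h)]. *)
Lemma is_derive_flat_0 k : is_derive (flat k) 0 0.
Proof.
  apply is_derive_Reals. intros eps Heps.
  assert (Hf : 0 < INR (fact (S (S k)))) by apply INR_fact_lt_0.
  exists (mkposreal _ (Rdiv_lt_0_compat _ _ Heps Hf)).
  intros h Hh0 Hh. change (Rabs h < eps / INR (fact (S (S k)))) in Hh. rewrite Rplus_0_l, (flat_nonpos k 0) by lra.
  destruct (Rle_lt_dec h 0) as [Hneg|Hpos].
  - rewrite flat_nonpos by exact Hneg.
    replace ((0 - 0) / h - 0) with 0 by (field; auto). rewrite Rabs_R0; lra.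
  - replace ((flat k h - 0) / h - 0) with (flat (S k) h)
      by (rewrite !flat_pos by exact Hpos; simpl; field; lra).
    rewrite Rabs_pos_eq by apply flat_ge0. rewrite Rabs_pos_eq in Hh by lra.
    eapply Rle_lt_trans; [now apply flat_le_linear|].
    apply (Rmult_lt_compat_l (INR (fact (S (S k))))) in Hh; [|exact Hf].
    replace (INR (fact (S (S k))) * (eps / INR (fact (S (S k))))) with eps in Hh
      by (field; lra).
    exact Hh.
Qed.

Lemma is_derive_flat k t : is_derive (flat k) t (flat (S (S k)) t - INR k * flat (S k) t).
Proof.
  destruct (Rtotal_order t 0) as [Hneg|[Hzero|Hpos]].
  - rewrite !flat_nonpos by lra. replace (0 - INR k * 0) with 0 by ring.
    apply (is_derive_ext_loc (fun _ => 0)).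
    + apply (locally_interval _ t m_infty 0); simpl; auto.
      intros y _ Hy. rewrite flat_nonpos; auto; lra.
    + apply (@is_derive_const R_AbsRing R_NormedModule).
  - subst t. rewrite !flat_nonpos by lra. replace (0 - INR k * 0) with 0 by ring.
    apply is_derive_flat_0.
  - apply (is_derive_ext_loc (fun s => exp (- / s) * (/ s) ^ k)).
    + apply (locally_interval _ t 0 p_infty); simpl; auto.
      intros y Hy _. now rewrite flat_pos.
    + rewrite !flat_pos by exact Hpos. auto_derive; [lra|].
      destruct k as [|m]; simpl; field; lra.
Qed.

Lemma is_derive_flat_shift k a t :
  is_derive (fun t => flat k (t - a)) t (flat (S (S k)) (t - a) - INR k * flat (S k) (t - a)).
Proof.
  rewrite <- (Rmult_1_l (_ - _)).
  apply (is_derive_comp (flat k) (fun t => t - a)); [apply is_derive_flat|auto_derive; auto].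
Qed.

Lemma is_derive_flat_reflect k b t :
  is_derive (fun t => flat k (b - t)) t (- (flat (S (S k)) (b - t) - INR k * flat (S k) (b - t))).
Proof.
  replace (- (flat (S (S k)) (b - t) - INR k * flat (S k) (b - t)))
    with (-1 * (flat (S (S k)) (b - t) - INR k * flat (S k) (b - t))) by ring.
  apply (is_derive_comp (flat k) (fun t => b - t)); [apply is_derive_flat|auto_derive; auto].
Qed.

Definition step_den a b t := flat 0 (t - a) + flat 0 (b - t).

Definition step a b t := flat 0 (t - a) / step_den a b t.

Lemma step_den_pos a b t : a < b -> 0 < step_den a b t.
Proof.
  intros H; unfold step_den.
  pose proof (flat_ge0 0 (t - a)); pose proof (flat_ge0 0 (b - t)).
  destruct (Rlt_or_le a t); [pose proof (flat_gt0 0 (t - a))|pose proof (flat_gt0 0 (b - t))]; lra.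
Qed.

Lemma is_derive_step_den a b t :
  is_derive (step_den a b) t (flat 2 (t - a) - flat 2 (b - t)).
Proof.
  evar (l : R). replace (_ - flat 2 _) with l;
    [apply (@is_derive_plus R_AbsRing R_NormedModule); [apply is_derive_flat_shift|apply is_derive_flat_reflect]|].
  unfold l, plus; simpl. ring.
Qed.

(* Closed under differentiation, so they generate a differential algebra containing [step a b]. *)
Definition step_gen a b (f : R -> R) : Prop :=
  (exists k, f = fun t => flat k (t - a)) \/ (exists k, f = fun t => flat k (b - t))
  \/ (exists k, f = fun t => (/ step_den a b t) ^ k).

Lemma step_gen_Derive a b : a < b -> forall f, step_gen a b f ->
  (forall t, ex_derive f t) /\ alg1 (step_gen a b) (Derive f).
Proof.
  intros Hab f [[k ->]|[[k ->]|[k ->]]].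
  - split; [intro t; eexists; apply is_derive_flat_shift|].
    replace (Derive (fun t => flat k (t - a)))
      with (fun t => flat (S (S k)) (t - a) + (- INR k) * flat (S k) (t - a)).
    + apply alg1_plus; [|apply alg1_mult; [apply alg1_const|]]; apply alg1_gen; left; eauto.
    + apply functional_extensionality; intro t. symmetry; apply is_derive_unique.
      replace (_ + _) with (flat (S (S k)) (t - a) - INR k * flat (S k) (t - a)) by ring.
      apply is_derive_flat_shift.
  - split; [intro t; eexists; apply is_derive_flat_reflect|].
    replace (Derive (fun t => flat k (b - t)))
      with (fun t => (-1) * flat (S (S k)) (b - t) + INR k * flat (S k) (b - t)).
    + apply alg1_plus; apply alg1_mult; try apply alg1_const; apply alg1_gen; right; left; eauto.
    + apply functional_extensionality; intro t. symmetry; apply is_derive_unique.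
      replace (_ + _) with (- (flat (S (S k)) (b - t) - INR k * flat (S k) (b - t))) by ring.
      apply is_derive_flat_reflect.
  - set (D t := flat 2 (t - a) + (-1) * flat 2 (b - t)).
    assert (HD : forall t, is_derive (fun t => (/ step_den a b t) ^ k) t
        (INR k * ((-1) * D t * (/ step_den a b t) ^ 2) * (/ step_den a b t) ^ pred k)).
    { intro t. pose proof (step_den_pos a b t Hab).
      evar (l : R). replace (INR k * _ * _) with l;
        [apply (is_derive_pow (fun t => / step_den a b t)), is_derive_inv; [apply is_derive_step_den|lra]|].
      unfold l, D. field. lra. }
    split; [intro t; eexists; apply HD|].
    replace (Derive (fun t => (/ step_den a b t) ^ k))
      with (fun t => INR k * ((-1) * D t * (/ step_den a b t) ^ 2) * (/ step_den a b t) ^ pred k)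
      by (apply functional_extensionality; intro t; symmetry; apply is_derive_unique, HD).
    apply alg1_mult; [|apply alg1_gen; right; right; eauto].
    apply alg1_mult; [apply alg1_const|].
    apply alg1_mult; [|apply alg1_gen; right; right; eauto].
    apply alg1_mult; [apply alg1_const|].
    apply alg1_plus; [|apply alg1_mult; [apply alg1_const|]]; apply alg1_gen; unfold step_gen; eauto.
Qed.

Lemma smooth1_step a b : a < b -> smooth1 (step a b).
Proof.
  intros Hab. apply (smooth1_of_alg1 (step_gen a b)); [now apply step_gen_Derive|].
  replace (step a b) with (fun t => flat 0 (t - a) * (/ step_den a b t) ^ 1)
    by (apply functional_extensionality; intro t; unfold step; simpl; field;
        apply Rgt_not_eq, step_den_pos, Hab).
  apply alg1_mult; apply alg1_gen; unfold step_gen; eauto.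
Qed.

Lemma step_left a b t : t <= a -> step a b t = 0.
Proof. intros H. unfold step. rewrite flat_nonpos by lra. unfold Rdiv; ring. Qed.

Lemma step_right a b t : a < b -> b <= t -> step a b t = 1.
Proof.
  intros Hab H. unfold step, step_den. rewrite (flat_nonpos 0 (b - t)) by lra.
  pose proof (flat_gt0 0 (t - a)). field. lra.
Qed.

Lemma Derive_step_left a b t : t < a -> Derive (step a b) t = 0.
Proof.
  intros H. rewrite (Derive_ext_loc _ (fun _ => 0)); [apply Derive_const|].
  apply (locally_interval _ t m_infty a); simpl; auto.
  intros y _ Hy. apply step_left; lra.
Qed.

Lemma Derive_step_right a b t : a < b -> b < t -> Derive (step a b) t = 0.
Proof.
  intros Hab H. rewrite (Derive_ext_loc _ (fun _ => 1)); [apply Derive_const|].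
  apply (locally_interval _ t b p_infty); simpl; auto.
  intros y Hy _. apply step_right; lra.
Qed.

(** * Smooth functions of two variables *)

Ltac funext2 := apply functional_extensionality; intro; apply functional_extensionality; intro.

Lemma ex_pd2_const i c x y : ex_pd2 i (fun _ _ => c) x y.
Proof. destruct i; simpl; apply ex_derive_const. Qed.

Lemma ex_pd2_plus i f g x y : ex_pd2 i f x y -> ex_pd2 i g x y ->
  ex_pd2 i (fun x y => f x y + g x y) x y.
Proof. destruct i; simpl; apply (@ex_derive_plus R_AbsRing R_NormedModule). Qed.

Lemma ex_pd2_mult i f g x y : ex_pd2 i f x y -> ex_pd2 i g x y ->
  ex_pd2 i (fun x y => f x y * g x y) x y.
Proof. destruct i; simpl; apply ex_derive_mult. Qed.

Lemma pd2_const i c : pd2 i (fun _ _ => c) = fun _ _ => 0.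
Proof. funext2. destruct i; simpl; apply Derive_const. Qed.

Lemma pd2_plus i f g x y : ex_pd2 i f x y -> ex_pd2 i g x y ->
  pd2 i (fun x y => f x y + g x y) x y = pd2 i f x y + pd2 i g x y.
Proof. destruct i; simpl; apply Derive_plus. Qed.

Lemma pd2_minus i f g x y : ex_pd2 i f x y -> ex_pd2 i g x y ->
  pd2 i (fun x y => f x y - g x y) x y = pd2 i f x y - pd2 i g x y.
Proof. destruct i; simpl; apply Derive_minus. Qed.

Lemma pd2_mult i f g x y : ex_pd2 i f x y -> ex_pd2 i g x y ->
  pd2 i (fun x y => f x y * g x y) x y = pd2 i f x y * g x y + f x y * pd2 i g x y.
Proof.
  destruct i; simpl; intros.
  - apply (Derive_mult (fun s => f s y) (fun s => g s y)); auto.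
  - apply (Derive_mult (fun s => f x s) (fun s => g x s)); auto.
Qed.

Lemma ex_pd2_radial i r x y : (forall u, ex_derive r u) ->
  ex_pd2 i (fun x y => r (x ^ 2 + y ^ 2)) x y.
Proof.
  intros Hr. destruct i.
  - apply (ex_derive_comp r (fun s => s ^ 2 + y ^ 2)); [apply Hr|auto_derive; auto].
  - apply (ex_derive_comp r (fun s => x ^ 2 + s ^ 2)); [apply Hr|auto_derive; auto].
Qed.

Lemma pd2_radial i r x y : (forall u, ex_derive r u) ->
  pd2 i (fun x y => r (x ^ 2 + y ^ 2)) x y
  = Derive r (x ^ 2 + y ^ 2) * (2 * match i with O => x | _ => y end).
Proof.
  intros Hr. destruct i; cbv beta iota delta [pd2].
  - rewrite (Derive_comp r (fun s => s ^ 2 + y ^ 2)) by (apply Hr || auto_derive; auto).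
    replace (Derive (fun s => s ^ 2 + y ^ 2) x) with (2 * x)
      by (symmetry; apply is_derive_unique; auto_derive; auto; ring).
    ring.
  - rewrite (Derive_comp r (fun s => x ^ 2 + s ^ 2)) by (apply Hr || auto_derive; auto).
    replace (Derive (fun s => x ^ 2 + s ^ 2) y) with (2 * y)
      by (symmetry; apply is_derive_unique; auto_derive; auto; ring).
    ring.
Qed.

Lemma continuous2_of_pt f : (forall x y, continuity_2d_pt f x y) ->
  forall p : R * R, continuous (fun q : R * R => f (fst q) (snd q)) p.
Proof. intros H [x y]. apply continuity_2d_pt_filterlim, H. Qed.

Lemma smooth2_of_stable (F : fun2 -> Prop) :
  (forall f, F f -> (forall i x y, ex_pd2 i f x y) /\ (forall x y, continuity_2d_pt f x y)
     /\ forall i, F (pd2 i f)) ->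
  forall f, F f -> smooth2 f.
Proof.
  intros HF f Hf.
  assert (Hl : forall l, F (iter_pd2 l f)).
  { induction l as [|i l IH]; [exact Hf|exact (proj2 (proj2 (HF _ IH)) i)]. }
  intro l. destruct (HF _ (Hl l)) as [Hex [Hcont _]].
  split; [exact Hex|now apply continuous2_of_pt].
Qed.

Lemma iter_pd2_app l i f : iter_pd2 (l ++ i :: nil) f = iter_pd2 l (pd2 i f).
Proof. induction l as [|j l IH]; simpl; [reflexivity|now rewrite IH]. Qed.

Lemma smooth2_pd i f : smooth2 f -> smooth2 (pd2 i f).
Proof. intros H l. rewrite <- iter_pd2_app. apply H. Qed.

Lemma smooth2_ex_pd i f x y : smooth2 f -> ex_pd2 i f x y.
Proof. intros H. apply (proj1 (H nil)). Qed.

Lemma smooth2_continuity_pt f x y : smooth2 f -> continuity_2d_pt f x y.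
Proof. intros H. apply continuity_2d_pt_filterlim, (proj2 (H nil) (x, y)). Qed.

Inductive alg2 (G : fun2 -> Prop) : fun2 -> Prop :=
| alg2_const c : alg2 G (fun _ _ => c)
| alg2_gen f : G f -> alg2 G f
| alg2_plus f g : alg2 G f -> alg2 G g -> alg2 G (fun x y => f x y + g x y)
| alg2_mult f g : alg2 G f -> alg2 G g -> alg2 G (fun x y => f x y * g x y).

Lemma smooth2_of_alg2 (G : fun2 -> Prop) :
  (forall g, G g -> (forall i x y, ex_pd2 i g x y) /\ (forall x y, continuity_2d_pt g x y)
     /\ forall i, alg2 G (pd2 i g)) ->
  forall f, alg2 G f -> smooth2 f.
Proof.
  intros HG. apply smooth2_of_stable.
  induction 1 as [c|f Hf|f g _ [Hf1 [Hf2 Hf3]] _ [Hg1 [Hg2 Hg3]]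
     |f g Hf [Hf1 [Hf2 Hf3]] Hg [Hg1 [Hg2 Hg3]]].
  - split; [|split]; intros.
    + apply ex_pd2_const.
    + apply continuity_2d_pt_const.
    + rewrite pd2_const. apply alg2_const.
  - now apply HG.
  - split; [|split]; intros.
    + now apply ex_pd2_plus.
    + now apply continuity_2d_pt_plus.
    + replace (pd2 i _) with (fun x y => pd2 i f x y + pd2 i g x y)
        by (funext2; symmetry; now apply pd2_plus).
      now apply alg2_plus.
  - split; [|split]; intros.
    + now apply ex_pd2_mult.
    + now apply continuity_2d_pt_mult.
    + replace (pd2 i _) with (fun x y => pd2 i f x y * g x y + f x y * pd2 i g x y)
        by (funext2; symmetry; now apply pd2_mult).
      apply alg2_plus; apply alg2_mult; auto.
Qed.

Definition smooth2_gen (f : fun2) : Prop :=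
  smooth2 f \/ (exists r, smooth1 r /\ f = fun x y => r (x ^ 2 + y ^ 2))
  \/ f = (fun x y => x) \/ f = (fun x y => y).

Lemma continuity_2d_pt_radial r x y : (forall u, continuous r u) ->
  continuity_2d_pt (fun x y => r (x ^ 2 + y ^ 2)) x y.
Proof.
  intros Hr. apply (continuity_1d_2d_pt_comp r (fun x y => x ^ 2 + y ^ 2)).
  - apply continuity_pt_filterlim, Hr.
  - apply continuity_2d_pt_plus; simpl; repeat apply continuity_2d_pt_mult;
      first [apply continuity_2d_pt_id1|apply continuity_2d_pt_id2|apply continuity_2d_pt_const].
Qed.

Lemma smooth2_gen_pd g : smooth2_gen g ->
  (forall i x y, ex_pd2 i g x y) /\ (forall x y, continuity_2d_pt g x y)
     /\ forall i, alg2 smooth2_gen (pd2 i g).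
Proof.
  intros [Hg|[[r [Hr ->]]|[-> | ->]]].
  - split; [|split]; intros.
    + now apply smooth2_ex_pd.
    + now apply smooth2_continuity_pt.
    + now apply alg2_gen; left; apply smooth2_pd.
  - assert (Hex : forall u, ex_derive r u) by (intro; now apply smooth1_ex_derive).
    split; [|split]; intros.
    + now apply ex_pd2_radial.
    + apply continuity_2d_pt_radial. intro; now apply smooth1_continuous.
    + replace (pd2 i _) with (fun x y => Derive r (x ^ 2 + y ^ 2)
                 * (2 * match i with O => x | _ => y end))
        by (funext2; symmetry; now apply pd2_radial).
      apply alg2_mult.
      * apply alg2_gen; right; left. exists (Derive r). split; [now apply smooth1_Derive|reflexivity].
      * apply alg2_mult; [apply alg2_const|].
        apply alg2_gen; right; right. destruct i; auto.
  - split; [|split]; intros.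
    + destruct i; simpl; [apply ex_derive_id|apply ex_derive_const].
    + apply continuity_2d_pt_id1.
    + replace (pd2 i _) with (fun _ _ : R => match i with O => 1 | _ => 0 end)
        by (funext2; destruct i; simpl; symmetry; [apply Derive_id|apply Derive_const]).
      apply alg2_const.
  - split; [|split]; intros.
    + destruct i; simpl; [apply ex_derive_const|apply ex_derive_id].
    + apply continuity_2d_pt_id2.
    + replace (pd2 i _) with (fun _ _ : R => match i with O => 0 | _ => 1 end)
        by (funext2; destruct i; simpl; symmetry; [apply Derive_const|apply Derive_id]).
      apply alg2_const.
Qed.

Lemma smooth2_alg2 f : alg2 smooth2_gen f -> smooth2 f.
Proof. apply smooth2_of_alg2, smooth2_gen_pd. Qed.

Lemma smooth2_const c : smooth2 (fun _ _ => c).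
Proof. apply smooth2_alg2, alg2_const. Qed.

Lemma smooth2_plus f g : smooth2 f -> smooth2 g -> smooth2 (fun x y => f x y + g x y).
Proof. intros; apply smooth2_alg2, alg2_plus; apply alg2_gen; now left. Qed.

Lemma smooth2_mult f g : smooth2 f -> smooth2 g -> smooth2 (fun x y => f x y * g x y).
Proof. intros; apply smooth2_alg2, alg2_mult; apply alg2_gen; now left. Qed.

Lemma smooth2_radial r : smooth1 r -> smooth2 (fun x y => r (x ^ 2 + y ^ 2)).
Proof. intros; apply smooth2_alg2, alg2_gen; right; left; eauto. Qed.

Lemma smooth2_minus f g : smooth2 f -> smooth2 g -> smooth2 (fun x y => f x y - g x y).
Proof.
  intros Hf Hg. replace (fun x y => f x y - g x y) with (fun x y => f x y + (-1) * g x y)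
    by (funext2; ring).
  apply smooth2_plus, smooth2_mult; auto using smooth2_const.
Qed.

(** * Primitives in the first variable *)

Lemma continuous_section1 f x y : continuity_2d_pt f x y -> continuous (fun s => f s y) x.
Proof.
  intros H. apply continuity_pt_filterlim. intros eps Heps.
  destruct (H (mkposreal eps Heps)) as [d Hd]. exists d. split; [apply cond_pos|].
  intros z [_ Hz]. apply Hd; [exact Hz|]. rewrite Rminus_diag, Rabs_R0. apply cond_pos.
Qed.

Lemma continuity_2d_pt_swap f x y :
  continuity_2d_pt f x y -> continuity_2d_pt (fun u v => f v u) y x.
Proof. intros H eps. destruct (H eps) as [d Hd]. exists d. intros u v Hu Hv. now apply Hd. Qed.

(* Uniform continuity bounds [f] on each horizontal strip of height [dl / 2] in terms of the
   previous one, starting from the maximum of [|f|] on the bottom edge. *)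
Lemma continuity_2d_bounded_rect f a b c d : a <= b -> c <= d ->
  (forall x y, continuity_2d_pt f x y) ->
  exists M, forall x y, a <= x <= b -> c <= y <= d -> Rabs (f x y) <= M.
Proof.
  intros Hab Hcd Hf.
  destruct (uniform_continuity_2d f a b c d) with (eps := mkposreal 1 Rlt_0_1) as [dl Hdl].
  { intros; apply Hf. }
  pose proof (cond_pos dl) as Hdl0.
  destruct (continuous_ab_maj_consistent (fun s => Rabs (f s c)) a b Hab) as [xm [Hxm _]].
  { intros s _. apply continuous_Rabs_comp, continuous_section1, Hf. }
  assert (Hstrip : forall n x y, a <= x <= b -> c <= y <= d -> y <= c + INR n * (dl / 2) ->
             Rabs (f x y) <= Rabs (f xm c) + INR n).
  { induction n as [|n IH]; intros x y Hx Hy Hyn.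
    - simpl in Hyn. replace y with c by lra. rewrite Rplus_0_r. now apply Hxm.
    - rewrite S_INR in *. destruct (Rle_dec y (c + INR n * (dl / 2))) as [Hle|Hgt].
      + specialize (IH x y Hx Hy Hle). lra.
      + assert (0 <= INR n * (dl / 2)) by (apply Rmult_le_pos; [apply pos_INR|lra]).
        assert (Hy' : exists y', c <= y' <= d /\ y' <= c + INR n * (dl / 2) /\ Rabs (y - y') < dl).
        { destruct (Rle_dec (y - dl / 2) c).
          - exists c. repeat split; try lra. apply Rabs_def1; lra.
          - exists (y - dl / 2). repeat split; try lra. apply Rabs_def1; lra. }
        destruct Hy' as [y' [Hy1 [Hy2 Hy3]]].
        assert (Hclose : Rabs (f x y - f x y') < 1).
        { apply Hdl; auto. rewrite Rminus_diag, Rabs_R0; lra. }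
        specialize (IH x y' Hx Hy1 Hy2).
        pose proof (Rabs_triang (f x y - f x y') (f x y')).
        replace (f x y - f x y' + f x y') with (f x y) in * by ring. lra. }
  destruct (INR_archimed (dl / 2) (d - c)) as [N HN]; [lra|].
  exists (Rabs (f xm c) + INR N). intros x y Hx Hy. apply Hstrip; auto; lra.
Qed.

Lemma ex_RInt_continuous_R (f : R -> R) a b : (forall t, continuous f t) -> ex_RInt f a b.
Proof. intros H. apply (@ex_RInt_continuous R_CompleteNormedModule). intros; apply H. Qed.

Lemma abs_RInt_le_const_abs (f : R -> R) a b M : ex_RInt f a b ->
  (forall t, Rmin a b <= t <= Rmax a b -> Rabs (f t) <= M) ->
  Rabs (RInt f a b) <= Rabs (b - a) * M.
Proof.
  intros He H. destruct (Rle_dec a b) as [Hab|Hab].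
  - rewrite (Rabs_pos_eq (b - a)) by lra. apply abs_RInt_le_const; auto.
    intros t Ht; apply H. rewrite Rmin_left, Rmax_right; lra.
  - rewrite <- (opp_RInt_swap f b a) by now apply ex_RInt_swap.
    change (Rabs (- RInt f b a) <= Rabs (b - a) * M).
    rewrite Rabs_Ropp, Rabs_minus_sym, (Rabs_pos_eq (a - b)) by lra.
    apply abs_RInt_le_const; [lra|now apply ex_RInt_swap|].
    intros t Ht; apply H. rewrite Rmin_right, Rmax_left; lra.
Qed.

Definition xprim (a : R) (G : fun2) : fun2 := fun x y => RInt (fun s => G s y) a x.

Section Xprim.

Variables (a : R) (G : fun2).
Hypothesis HG : forall x y, continuity_2d_pt G x y.

Lemma ex_RInt_section y p q : ex_RInt (fun s => G s y) p q.
Proof. apply ex_RInt_continuous_R. intro; apply continuous_section1, HG. Qed.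

(* [xprim a G u v - xprim a G x0 y0] splits as the integral over [[a, x0]] of
   [G s v - G s y0], small by uniform continuity, plus the integral of [G s v] over
   [[x0, u]], small since [G] is bounded. *)
Lemma continuity_2d_pt_xprim x0 y0 : continuity_2d_pt (xprim a G) x0 y0.
Proof.
  intros eps. pose proof (cond_pos eps) as Heps.
  set (m1 := Rmin a x0 - 1). set (m2 := Rmax a x0 + 1).
  pose proof (Rmin_l a x0); pose proof (Rmin_r a x0).
  pose proof (Rmax_l a x0); pose proof (Rmax_r a x0).
  destruct (continuity_2d_bounded_rect G m1 m2 (y0 - 1) (y0 + 1)) as [M HM];
    [unfold m1, m2; lra|lra|exact HG|].
  assert (HM0 : 0 <= M) by (apply Rle_trans with (Rabs (G m1 y0)); [apply Rabs_pos|apply HM; unfold m1, m2; lra]).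
  set (L := Rabs (x0 - a) + 1). assert (HL : 0 < L) by (unfold L; pose proof (Rabs_pos (x0 - a)); lra).
  destruct (uniform_continuity_2d G m1 m2 (y0 - 1) (y0 + 1))
    with (eps := mkposreal _ (Rdiv_lt_0_compat eps (2 * L) Heps ltac:(lra))) as [d1 Hd1].
  { intros; apply HG. }
  assert (Hd : 0 < Rmin 1 (Rmin d1 (eps / (2 * (M + 1))))).
  { repeat apply Rmin_pos; try lra; [apply cond_pos|apply Rdiv_lt_0_compat; lra]. }
  exists (mkposreal _ Hd). simpl. intros u v Hu Hv.
  pose proof (Rmin_l 1 (Rmin d1 (eps / (2 * (M + 1))))).
  pose proof (Rmin_r 1 (Rmin d1 (eps / (2 * (M + 1))))).
  pose proof (Rmin_l d1 (eps / (2 * (M + 1)))); pose proof (Rmin_r d1 (eps / (2 * (M + 1)))).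
  apply Rabs_lt_between' in Hu as Hu'. apply Rabs_lt_between' in Hv as Hv'.
  assert (Hfar : Rabs (RInt (fun s => G s v - G s y0) a x0) <= Rabs (x0 - a) * (eps / (2 * L))).
  { apply abs_RInt_le_const_abs.
    - apply (ex_RInt_minus (V := R_NormedModule)); apply ex_RInt_section.
    - intros s Hs. left. apply (Hd1 s y0 s v); unfold m1, m2; try lra.
      rewrite Rminus_diag, Rabs_R0. apply cond_pos. }
  assert (Hnear : Rabs (RInt (fun s => G s v) x0 u) <= Rabs (u - x0) * M).
  { apply abs_RInt_le_const_abs; [apply ex_RInt_section|].
    intros s Hs. apply HM; [|lra]. unfold m1, m2.
    pose proof (Rmin_l x0 u); pose proof (Rmin_r x0 u); pose proof (Rmax_l x0 u); pose proof (Rmax_r x0 u).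
    unfold Rmin, Rmax in *. destruct (Rle_dec x0 u), (Rle_dec a x0); lra. }
  assert (Hdiff : RInt (fun s => G s v - G s y0) a x0
                  = RInt (fun s => G s v) a x0 - RInt (fun s => G s y0) a x0)
    by exact (RInt_minus (V := R_CompleteNormedModule) _ _ a x0
                (ex_RInt_section v a x0) (ex_RInt_section y0 a x0)).
  unfold xprim.
  rewrite <- (RInt_Chasles (V := R_CompleteNormedModule) (fun s => G s v) a x0 u)
    by apply ex_RInt_section.
  replace (plus (RInt (fun s => G s v) a x0) (RInt (fun s => G s v) x0 u) - RInt (fun s => G s y0) a x0)
    with (RInt (fun s => G s v - G s y0) a x0 + RInt (fun s => G s v) x0 u)
    by (rewrite Hdiff; unfold plus; simpl; ring).
  eapply Rle_lt_trans; [apply Rabs_triang|].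
  assert (Rabs (x0 - a) * (eps / (2 * L)) < eps / 2).
  { apply (Rmult_lt_reg_r (2 * L)); [lra|]. unfold L in *.
    field_simplify; [|lra]. nra. }
  assert (Rabs (u - x0) * M <= eps / 2 * (M / (M + 1))).
  { replace (eps / 2 * (M / (M + 1))) with (eps / (2 * (M + 1)) * M) by (field; lra).
    apply Rmult_le_compat_r; lra. }
  assert (eps / 2 * (M / (M + 1)) <= eps / 2).
  { rewrite <- (Rmult_1_r (eps / 2)) at 2. apply Rmult_le_compat_l; [lra|].
    apply (Rmult_le_reg_r (M + 1)); [lra|]. field_simplify; lra. }
  lra.
Qed.

Lemma is_derive_xprim_0 x y : is_derive (fun s => xprim a G s y) x (G x y).
Proof.
  apply (is_derive_RInt (fun t => G t y) (fun s => RInt (fun t => G t y) a s) a x).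
  - apply filter_forall. intro. apply (RInt_correct (V := R_CompleteNormedModule)), ex_RInt_section.
  - apply continuous_section1, HG.
Qed.

End Xprim.

Lemma is_derive_xprim_1 a G x y : smooth2 G ->
  is_derive (fun s => xprim a G x s) y (xprim a (pd2 1 G) x y).
Proof.
  intros HG. unfold xprim.
  apply (is_derive_RInt_param (fun u t => G t u) a x y).
  - apply filter_forall. intros y0 t _. apply (smooth2_ex_pd 1), HG.
  - intros t _. apply (continuity_2d_pt_swap (pd2 1 G)), smooth2_continuity_pt, smooth2_pd, HG.
  - apply filter_forall. intro; apply ex_RInt_section. intros; now apply smooth2_continuity_pt.
Qed.

(* Partial derivatives never leave the family [xprim a G + K] with [G], [K] smooth. *)
Definition xprim_family (a : R) (F : fun2) : Prop :=
  exists G K, smooth2 G /\ smooth2 K /\ F = fun x y => xprim a G x y + K x y.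

Lemma xprim_family_pd a F : xprim_family a F ->
  (forall i x y, ex_pd2 i F x y) /\ (forall x y, continuity_2d_pt F x y)
     /\ forall i, xprim_family a (pd2 i F).
Proof.
  intros [G [K [HG [HK ->]]]].
  assert (HGc : forall x y, continuity_2d_pt G x y) by (intros; now apply smooth2_continuity_pt).
  assert (Hex : forall i x y, ex_pd2 i (xprim a G) x y).
  { intros [|i] x y; eexists; [apply is_derive_xprim_0|apply is_derive_xprim_1]; auto. }
  split; [|split].
  - intros i x y. apply ex_pd2_plus; auto. now apply smooth2_ex_pd.
  - intros x y. apply continuity_2d_pt_plus; [now apply continuity_2d_pt_xprim|].
    now apply smooth2_continuity_pt.
  - intros [|i].
    + exists (fun _ _ => 0), (fun x y => G x y + pd2 0 K x y).
      split; [apply smooth2_const|split; [apply smooth2_plus; auto; now apply smooth2_pd|]].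
      funext2. rewrite pd2_plus by (auto; now apply smooth2_ex_pd). simpl.
      rewrite (is_derive_unique _ _ _ (is_derive_xprim_0 a G HGc _ _)).
      unfold xprim. rewrite RInt_const. unfold scal; simpl; unfold mult; simpl. ring.
    + exists (pd2 1 G), (pd2 1 K). split; [now apply smooth2_pd|split; [now apply smooth2_pd|]].
      funext2. rewrite pd2_plus by (auto; now apply smooth2_ex_pd).
      simpl. now rewrite (is_derive_unique _ _ _ (is_derive_xprim_1 a G _ _ HG)).
Qed.

Lemma smooth2_xprim a G : smooth2 G -> smooth2 (xprim a G).
Proof.
  intros HG. apply (smooth2_of_stable (xprim_family a)); [apply xprim_family_pd|].
  exists G, (fun _ _ => 0). split; [exact HG|split; [apply smooth2_const|]].
  funext2. ring.
Qed.

(** * Smooth functions of three variables *)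

Ltac funext3 := apply functional_extensionality; intro;
  apply functional_extensionality; intro; apply functional_extensionality; intro.

Definition continuous3 (f : fun3) : Prop := forall p : R * (R * R),
  continuous (fun q : R * (R * R) => f (fst q) (fst (snd q)) (snd (snd q))) p.

Lemma ex_pd3_const i c t x y : ex_pd3 i (fun _ _ _ => c) t x y.
Proof. destruct i as [|[|i]]; simpl; apply ex_derive_const. Qed.

Lemma ex_pd3_plus i f g t x y : ex_pd3 i f t x y -> ex_pd3 i g t x y ->
  ex_pd3 i (fun t x y => f t x y + g t x y) t x y.
Proof. destruct i as [|[|i]]; simpl; apply (@ex_derive_plus R_AbsRing R_NormedModule). Qed.

Lemma ex_pd3_mult i f g t x y : ex_pd3 i f t x y -> ex_pd3 i g t x y ->
  ex_pd3 i (fun t x y => f t x y * g t x y) t x y.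
Proof. destruct i as [|[|i]]; simpl; apply ex_derive_mult. Qed.

Lemma pd3_const i c : pd3 i (fun _ _ _ => c) = fun _ _ _ => 0.
Proof. funext3. destruct i as [|[|i]]; simpl; apply Derive_const. Qed.

Lemma pd3_plus i f g t x y : ex_pd3 i f t x y -> ex_pd3 i g t x y ->
  pd3 i (fun t x y => f t x y + g t x y) t x y = pd3 i f t x y + pd3 i g t x y.
Proof. destruct i as [|[|i]]; simpl; apply Derive_plus. Qed.

Lemma pd3_mult i f g t x y : ex_pd3 i f t x y -> ex_pd3 i g t x y ->
  pd3 i (fun t x y => f t x y * g t x y) t x y
  = pd3 i f t x y * g t x y + f t x y * pd3 i g t x y.
Proof.
  destruct i as [|[|i]]; simpl; intros.
  - apply (Derive_mult (fun s => f s x y) (fun s => g s x y)); auto.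
  - apply (Derive_mult (fun s => f t s y) (fun s => g t s y)); auto.
  - apply (Derive_mult (fun s => f t x s) (fun s => g t x s)); auto.
Qed.

Lemma smooth3_of_stable (F : fun3 -> Prop) :
  (forall f, F f -> (forall i t x y, ex_pd3 i f t x y) /\ continuous3 f /\ forall i, F (pd3 i f)) ->
  forall f, F f -> smooth3 f.
Proof.
  intros HF f Hf.
  assert (Hl : forall l, F (iter_pd3 l f)).
  { induction l as [|i l IH]; [exact Hf|exact (proj2 (proj2 (HF _ IH)) i)]. }
  intro l. destruct (HF _ (Hl l)) as [Hex [Hcont _]]. split; [exact Hex|exact Hcont].
Qed.

Inductive alg3 (G : fun3 -> Prop) : fun3 -> Prop :=
| alg3_const c : alg3 G (fun _ _ _ => c)
| alg3_gen f : G f -> alg3 G f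
| alg3_plus f g : alg3 G f -> alg3 G g -> alg3 G (fun t x y => f t x y + g t x y)
| alg3_mult f g : alg3 G f -> alg3 G g -> alg3 G (fun t x y => f t x y * g t x y).

Lemma smooth3_of_alg3 (G : fun3 -> Prop) :
  (forall g, G g -> (forall i t x y, ex_pd3 i g t x y) /\ continuous3 g
     /\ forall i, alg3 G (pd3 i g)) ->
  forall f, alg3 G f -> smooth3 f.
Proof.
  intros HG. apply smooth3_of_stable.
  induction 1 as [c|f Hf|f g Hf [Hf1 [Hf2 Hf3]] Hg [Hg1 [Hg2 Hg3]]
     |f g Hf [Hf1 [Hf2 Hf3]] Hg [Hg1 [Hg2 Hg3]]].
  - split; [|split]; intros.
    + apply ex_pd3_const.
    + intro; apply continuous_const.
    + rewrite pd3_const. apply alg3_const.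
  - now apply HG.
  - split; [|split]; intros.
    + now apply ex_pd3_plus.
    + intro p. apply (@continuous_plus _ R_AbsRing R_NormedModule
        (fun q : R * (R * R) => f (fst q) (fst (snd q)) (snd (snd q)))
        (fun q : R * (R * R) => g (fst q) (fst (snd q)) (snd (snd q)))); auto.
    + replace (pd3 i _) with (fun t x y => pd3 i f t x y + pd3 i g t x y)
        by (funext3; symmetry; now apply pd3_plus).
      now apply alg3_plus.
  - split; [|split]; intros.
    + now apply ex_pd3_mult.
    + intro p. apply (@continuous_mult _ R_AbsRing
        (fun q : R * (R * R) => f (fst q) (fst (snd q)) (snd (snd q)))
        (fun q : R * (R * R) => g (fst q) (fst (snd q)) (snd (snd q)))); auto.
    + replace (pd3 i _) with (fun t x y => pd3 i f t x y * g t x y + f t x y * pd3 i g t x y)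
        by (funext3; symmetry; now apply pd3_mult).
      apply alg3_plus; apply alg3_mult; auto.
Qed.

Definition smooth3_gen (f : fun3) : Prop :=
  (exists g, smooth1 g /\ f = fun t _ _ => g t) \/ (exists g, smooth2 g /\ f = fun _ x y => g x y).

Lemma smooth3_gen_pd g : smooth3_gen g ->
  (forall i t x y, ex_pd3 i g t x y) /\ continuous3 g /\ forall i, alg3 smooth3_gen (pd3 i g).
Proof.
  intros [[h [Hh ->]]|[h [Hh ->]]]; split; [| split| |split].
  - intros [|[|i]] t x y; simpl; [now apply smooth1_ex_derive|apply ex_derive_const..].
  - intros p. apply (continuous_comp (fun q : R * (R * R) => fst q) h);
      [apply continuous_fst|now apply smooth1_continuous].
  - intros [|[|i]].
    + apply alg3_gen; left. exists (Derive h). split; [now apply smooth1_Derive|reflexivity].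
    + replace (pd3 1 _) with (fun _ _ _ : R => 0) by (funext3; symmetry; simpl; apply Derive_const).
      apply alg3_const.
    + replace (pd3 (S (S i)) _) with (fun _ _ _ : R => 0)
        by (funext3; symmetry; simpl; apply Derive_const).
      apply alg3_const.
  - intros [|[|i]] t x y; simpl; [apply ex_derive_const|apply (smooth2_ex_pd 0)|apply (smooth2_ex_pd 1)];
      exact Hh.
  - intros p. apply (continuous_comp (fun q : R * (R * R) => snd q) (fun q => h (fst q) (snd q))).
    + apply continuous_snd.
    + apply (proj2 (Hh nil)).
  - intros [|[|i]].
    + replace (pd3 0 _) with (fun _ _ _ : R => 0) by (funext3; symmetry; simpl; apply Derive_const).
      apply alg3_const.
    + apply alg3_gen; right. exists (pd2 0 h). split; [now apply smooth2_pd|reflexivity].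
    + apply alg3_gen; right. exists (pd2 1 h). split; [now apply smooth2_pd|reflexivity].
Qed.

Lemma smooth3_alg3 f : alg3 smooth3_gen f -> smooth3 f.
Proof. apply smooth3_of_alg3, smooth3_gen_pd. Qed.

Lemma alg3_fun_t g : smooth1 g -> alg3 smooth3_gen (fun t _ _ => g t).
Proof. intros; apply alg3_gen; left; eauto. Qed.

Lemma alg3_fun_xy g : smooth2 g -> alg3 smooth3_gen (fun _ x y => g x y).
Proof. intros; apply alg3_gen; right; eauto. Qed.

(** * Closed 1-forms supported in the interior of the disk are exact *)

Definition cutoff (d u : R) : R := 1 - step (1 - 2 * d / 3) (1 - d / 3) u.

Lemma smooth1_cutoff d : 0 < d -> smooth1 (cutoff d).
Proof. intros Hd. apply smooth1_minus; [apply smooth1_const|apply smooth1_step; lra]. Qed.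

Lemma cutoff_inner d u : u <= 1 - 2 * d / 3 -> cutoff d u = 1.
Proof. intros H. unfold cutoff. rewrite step_left by exact H. ring. Qed.

Lemma cutoff_outer d u : 0 < d -> 1 - d / 3 <= u -> cutoff d u = 0.
Proof. intros Hd H. unfold cutoff. rewrite step_right by lra. ring. Qed.

Lemma Derive_cutoff_off d u : 0 < d -> u < 1 - 2 * d / 3 \/ 1 - d / 3 < u ->
  Derive (cutoff d) u = 0.
Proof.
  intros Hd Hu. unfold cutoff.
  rewrite (Derive_minus (fun _ => 1) (step (1 - 2 * d / 3) (1 - d / 3)))
    by (apply ex_derive_const || (apply smooth1_ex_derive, smooth1_step; lra)).
  rewrite Derive_const.
  destruct Hu; [rewrite Derive_step_left by lra|rewrite Derive_step_right by lra]; ring.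
Qed.

Definition cut (d : R) (F : fun2) : fun2 := fun x y => cutoff d (x ^ 2 + y ^ 2) * F x y.

Lemma smooth2_cut d F : 0 < d -> smooth2 F -> smooth2 (cut d F).
Proof. intros. apply smooth2_mult; [apply smooth2_radial, smooth1_cutoff|]; auto. Qed.

Section CompactSupport.

Variables (d : R) (F : fun2).
Hypothesis Hd : 0 < d <= 1.
Hypothesis HF0 : forall x y, in_disk x y -> 1 - d < x ^ 2 + y ^ 2 -> F x y = 0.

Lemma cut_in_disk x y : in_disk x y -> cut d F x y = F x y.
Proof.
  intros Hin. unfold cut. destruct (Rle_dec (x ^ 2 + y ^ 2) (1 - d)).
  - rewrite cutoff_inner by lra. ring.
  - rewrite HF0 by (auto; lra). ring.
Qed.

Lemma cut_near_boundary x y : 1 - d < x ^ 2 + y ^ 2 -> cut d F x y = 0.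
Proof.
  intros Hr. unfold cut. destruct (Rle_dec (x ^ 2 + y ^ 2) 1).
  - rewrite HF0 by (unfold in_disk; lra). ring.
  - rewrite cutoff_outer by lra. ring.
Qed.

End CompactSupport.

Lemma RInt_zero_on (f : R -> R) a b : (forall s, Rmin a b < s < Rmax a b -> f s = 0) ->
  RInt f a b = 0.
Proof.
  intros H. rewrite (RInt_ext f (fun _ => 0)) by exact H.
  rewrite RInt_const. unfold scal; simpl; unfold mult; simpl. ring.
Qed.

Lemma is_derive_zero_constant (f : R -> R) : (forall t, is_derive f t 0) ->
  forall y z, f y = f z.
Proof.
  intros Hf y z.
  assert (HD : forall t, Derive f t = 0) by (intro; now apply is_derive_unique).
  assert (Hint : RInt (Derive f) z y = f y - f z).
  { apply RInt_Derive.
    - intros; eexists; apply Hf.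
    - intros. apply (continuous_ext (fun _ => 0)); [intro; symmetry; apply HD|apply continuous_const]. }
  rewrite RInt_zero_on in Hint by (intros; apply HD). lra.
Qed.

Section Poincare.

Variables (P Q : fun2) (d : R).
Hypotheses (HP : smooth2 P) (HQ : smooth2 Q) (Hd : 0 < d <= 1).
Hypothesis Hclosed : forall x y, in_disk x y -> pd2 0 Q x y = pd2 1 P x y.
Hypothesis HP0 : forall x y, in_disk x y -> 1 - d < x ^ 2 + y ^ 2 -> P x y = 0.
Hypothesis HQ0 : forall x y, in_disk x y -> 1 - d < x ^ 2 + y ^ 2 -> Q x y = 0.

(* Inside the disk this is the closedness of [(P, Q)]; elsewhere the cutoff and its
   derivative vanish, or [P = Q = 0]. *)
Lemma closed_cut x y : pd2 1 (cut d P) x y = pd2 0 (cut d Q) x y.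
Proof.
  assert (Hr : forall u, ex_derive (cutoff d) u) by (intro; apply smooth1_ex_derive, smooth1_cutoff; lra).
  unfold cut.
  rewrite !pd2_mult by (apply ex_pd2_radial || apply smooth2_ex_pd; auto).
  rewrite !pd2_radial by exact Hr.
  destruct (Rle_dec (x ^ 2 + y ^ 2) 1) as [Hin|Hout].
  - rewrite Hclosed by exact Hin.
    destruct (Rle_dec (x ^ 2 + y ^ 2) (1 - d)).
    + rewrite Derive_cutoff_off by lra. ring.
    + rewrite HP0, HQ0 by (unfold in_disk; lra). ring.
  - rewrite Derive_cutoff_off, cutoff_outer by lra. ring.
Qed.

Definition potential : fun2 := xprim (-2) (cut d P).

Lemma smooth2_potential : smooth2 potential.
Proof. apply smooth2_xprim, smooth2_cut; auto; lra. Qed.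

Lemma is_derive_potential_0 x y : is_derive (fun s => potential s y) x (cut d P x y).
Proof. apply is_derive_xprim_0. intros; apply smooth2_continuity_pt, smooth2_cut; auto; lra. Qed.

Lemma is_derive_potential_1 x y : is_derive (fun s => potential x s) y (cut d Q x y).
Proof.
  assert (HQc : smooth2 (cut d Q)) by (apply smooth2_cut; auto; lra).
  replace (cut d Q x y) with (xprim (-2) (pd2 1 (cut d P)) x y);
    [apply is_derive_xprim_1, smooth2_cut; auto; lra|].
  unfold xprim. rewrite (RInt_ext _ (Derive (fun s => cut d Q s y))) by (intros; apply closed_cut).
  rewrite RInt_Derive.
  - rewrite (cut_near_boundary d Q Hd HQ0 (-2) y) by nra. ring.
  - intros; apply (smooth2_ex_pd 0), HQc.
  - intros. apply (continuous_section1 (pd2 0 (cut d Q))).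
    apply smooth2_continuity_pt, smooth2_pd, HQc.
Qed.

Lemma potential_right_edge y : potential 2 y = 0.
Proof.
  assert (Hconst : forall v, is_derive (fun s => potential 2 s) v 0).
  { intro v. rewrite <- (cut_near_boundary d Q Hd HQ0 2 v) by nra.
    apply is_derive_potential_1. }
  rewrite (is_derive_zero_constant _ Hconst y 2).
  apply RInt_zero_on. intros s _. apply (cut_near_boundary d P Hd HP0). nra.
Qed.

(* For [x <= 0] integrate from the left edge, for [x > 0] from the right edge: along
   either segment [s^2 + y^2 >= x^2 + y^2]. *)
Lemma potential_near_boundary x y : 1 - d < x ^ 2 + y ^ 2 -> potential x y = 0.
Proof.
  intros Hr. pose proof (pow2_ge_0 y).
  destruct (Rle_dec x 0) as [Hx|Hx].
  - apply RInt_zero_on. intros s Hs. apply (cut_near_boundary d P Hd HP0).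
    unfold Rmin, Rmax in Hs. destruct (Rle_dec (-2) x); nra.
  - assert (Hright : RInt (fun s => cut d P s y) x 2 = 0).
    { apply RInt_zero_on. intros s Hs. apply (cut_near_boundary d P Hd HP0).
      unfold Rmin, Rmax in Hs. destruct (Rle_dec x 2); nra. }
    pose proof (potential_right_edge y) as Hedge. unfold potential, xprim in *.
    rewrite <- (RInt_Chasles (V := R_CompleteNormedModule) _ (-2) x 2) in Hedge
      by (apply ex_RInt_section; intros; apply smooth2_continuity_pt, smooth2_cut; auto; lra).
    rewrite Hright in Hedge. unfold plus, zero in Hedge; simpl in Hedge. lra.
Qed.

End Poincare.

Lemma closed_form_exact (P Q : fun2) (d : R) :
  smooth2 P -> smooth2 Q -> 0 < d <= 1 ->
  (forall x y, in_disk x y -> pd2 0 Q x y = pd2 1 P x y) ->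
  (forall x y, in_disk x y -> 1 - d < x ^ 2 + y ^ 2 -> P x y = 0 /\ Q x y = 0) ->
  exists H : fun2, smooth2 H /\
    (forall x y, in_disk x y -> pd2 0 H x y = P x y /\ pd2 1 H x y = Q x y) /\
    (forall x y, 1 - d < x ^ 2 + y ^ 2 -> H x y = 0).
Proof.
  intros HP HQ Hd Hclosed Hsupp.
  assert (HP0 : forall x y, in_disk x y -> 1 - d < x ^ 2 + y ^ 2 -> P x y = 0)
    by (intros; now apply Hsupp).
  assert (HQ0 : forall x y, in_disk x y -> 1 - d < x ^ 2 + y ^ 2 -> Q x y = 0)
    by (intros; now apply Hsupp).
  exists (potential P d). split; [|split].
  - now apply smooth2_potential.
  - intros x y Hin. split.
    + rewrite <- (cut_in_disk d P Hd HP0 x y Hin). apply is_derive_unique, is_derive_potential_0; auto.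
    + rewrite <- (cut_in_disk d Q Hd HQ0 x y Hin). apply is_derive_unique, is_derive_potential_1; auto.
  - intros x y Hr. eapply potential_near_boundary; eauto.
Qed.

(** * The contact form *)

Lemma contact_reeb_of_dform (a b c : fun3) :
  (forall t x y, in_cyl t x y ->
     0 < a t x y /\ pd3 0 b t x y - pd3 1 a t x y = 0 /\ pd3 0 c t x y - pd3 2 a t x y = 0 /\
     0 < pd3 1 c t x y - pd3 2 b t x y) ->
  is_contact_cyl a b c /\ is_reeb_cyl a b c (fun t x y => (/ a t x y, 0, 0)).
Proof.
  intros Hd. split.
  - intros t x y Hc. destruct (Hd t x y Hc) as (Ha & HA & HB & HC).
    unfold contact_density, dform_eval, form_eval, e_t, e_x, e_y.
    rewrite HA, HB. ring_simplify. nra.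
  - intros t x y Hc. destruct (Hd t x y Hc) as (Ha & HA & HB & _). split.
    + unfold form_eval. field. lra.
    + intros [[v0 v1] v2]. unfold dform_eval. rewrite HA, HB. ring.
Qed.

Definition chi : R -> R := step (-1/2) (1/2).

Lemma smooth1_chi : smooth1 chi.
Proof. apply smooth1_step; lra. Qed.

Definition interp_form (eps : R) (F0 F1 : fun2) : fun3 :=
  fun t x y => eps * ((1 - chi t) * F0 x y + chi t * F1 x y).

Definition dt_coef (eps : R) (H : fun2) : fun3 := fun t x y => 1 + eps * (Derive chi t * H x y).

Lemma smooth3_interp_form eps F0 F1 : smooth2 F0 -> smooth2 F1 -> smooth3 (interp_form eps F0 F1).
Proof.
  intros H0 H1. pose proof smooth1_chi.
  apply smooth3_alg3. unfold interp_form.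
  apply alg3_mult; [apply alg3_const|].
  apply alg3_plus; apply alg3_mult; auto using alg3_fun_t, alg3_fun_xy.
  apply alg3_fun_t, smooth1_minus; auto using smooth1_const.
Qed.

Lemma smooth3_dt_coef eps H : smooth2 H -> smooth3 (dt_coef eps H).
Proof.
  intros HH. apply smooth3_alg3. unfold dt_coef.
  apply alg3_plus; [apply alg3_const|]. apply alg3_mult; [apply alg3_const|].
  apply alg3_mult; [apply alg3_fun_t, smooth1_Derive, smooth1_chi|now apply alg3_fun_xy].
Qed.

Section Derivatives.

Variables (eps : R) (t x y : R).

Lemma ex_derive_chi : ex_derive chi t.
Proof. apply smooth1_ex_derive, smooth1_chi. Qed.

Lemma pd3_0_interp_form F0 F1 :
  pd3 0 (interp_form eps F0 F1) t x y = eps * (Derive chi t * (F1 x y - F0 x y)).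
Proof.
  apply is_derive_unique. unfold interp_form. pose proof ex_derive_chi.
  auto_derive; auto. change (fun s => chi s) with chi. ring.
Qed.

Lemma pd3_1_interp_form F0 F1 : ex_pd2 0 F0 x y -> ex_pd2 0 F1 x y ->
  pd3 1 (interp_form eps F0 F1) t x y = eps * ((1 - chi t) * pd2 0 F0 x y + chi t * pd2 0 F1 x y).
Proof. intros H0 H1. apply is_derive_unique. unfold interp_form. auto_derive; auto. cbv beta iota delta [pd2]. ring. Qed.

Lemma pd3_2_interp_form F0 F1 : ex_pd2 1 F0 x y -> ex_pd2 1 F1 x y ->
  pd3 2 (interp_form eps F0 F1) t x y = eps * ((1 - chi t) * pd2 1 F0 x y + chi t * pd2 1 F1 x y).
Proof. intros H0 H1. apply is_derive_unique. unfold interp_form. auto_derive; auto. cbv beta iota delta [pd2]. ring. Qed.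

Lemma pd3_1_dt_coef H : ex_pd2 0 H x y -> pd3 1 (dt_coef eps H) t x y = eps * (Derive chi t * pd2 0 H x y).
Proof. intros H0. apply is_derive_unique. unfold dt_coef. auto_derive; auto. cbv beta iota delta [pd2]. ring. Qed.

Lemma pd3_2_dt_coef H : ex_pd2 1 H x y -> pd3 2 (dt_coef eps H) t x y = eps * (Derive chi t * pd2 1 H x y).
Proof. intros H0. apply is_derive_unique. unfold dt_coef. auto_derive; auto. cbv beta iota delta [pd2]. ring. Qed.

End Derivatives.

Lemma dt_coef_ends eps H t x y : t < -1/2 \/ 1/2 < t -> dt_coef eps H t x y = 1.
Proof.
  intros Ht. unfold dt_coef, chi.
  destruct Ht; [rewrite Derive_step_left by lra|rewrite Derive_step_right by lra]; ring.
Qed.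

Lemma interp_form_bottom eps F0 F1 t x y : t < -1/2 -> interp_form eps F0 F1 t x y = eps * F0 x y.
Proof. intros Ht. unfold interp_form, chi. rewrite step_left by lra. ring. Qed.

Lemma interp_form_top eps F0 F1 t x y : 1/2 < t -> interp_form eps F0 F1 t x y = eps * F1 x y.
Proof. intros Ht. unfold interp_form, chi. rewrite step_right by lra. ring. Qed.

Lemma dt_coef_pos_small H : smooth2 H ->
  exists eps, 0 < eps /\ forall t x y, in_cyl t x y -> 0 < dt_coef eps H t x y.
Proof.
  intros HH.
  destruct (continuous_ab_maj_consistent (fun t => Rabs (Derive chi t)) (-1) 1) as [tm [Htm _]];
    [lra|intros; apply continuous_Rabs_comp, smooth1_continuous, smooth1_Derive, smooth1_chi|].
  destruct (continuity_2d_bounded_rect H (-1) 1 (-1) 1) as [M HM]; try lra.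
  { intros; now apply smooth2_continuity_pt. }
  set (C := Rabs (Derive chi tm)).
  assert (HC : 0 <= C) by apply Rabs_pos.
  assert (HM0 : 0 <= M) by (apply Rle_trans with (Rabs (H 0 0)); [apply Rabs_pos|apply HM; lra]).
  assert (He : 0 < / (C * M + 1)) by (apply Rinv_0_lt_compat; nra).
  assert (HeCM : / (C * M + 1) * (C * M) < 1).
  { apply (Rmult_lt_reg_r (C * M + 1)); [nra|]. field_simplify; nra. }
  exists (/ (C * M + 1)). split; [exact He|].
  intros t x y [Ht Hin]. unfold in_disk in Hin.
  assert (Hx : -1 <= x <= 1) by (pose proof (pow2_ge_0 y); split; nra).
  assert (Hy : -1 <= y <= 1) by (pose proof (pow2_ge_0 x); split; nra).
  pose proof (Htm t Ht) as Hchi. simpl in Hchi. fold C in Hchi.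
  assert (Hprod : Rabs (Derive chi t * H x y) <= C * M).
  { rewrite Rabs_mult. apply Rmult_le_compat; auto using Rabs_pos. }
  apply Rabs_le_between in Hprod as [Hlo _].
  assert (0 <= / (C * M + 1) * (Derive chi t * H x y + C * M)) by (apply Rmult_le_pos; lra).
  unfold dt_coef. nra.
Qed.

Section Alpha.

Variables (P0 Q0 P1 Q1 H : fun2) (eps : R).
Hypotheses (HP0 : smooth2 P0) (HQ0 : smooth2 Q0) (HP1 : smooth2 P1) (HQ1 : smooth2 Q1) (HH : smooth2 H).
Hypothesis Hcurl : forall x y, in_disk x y -> dcoef2 P0 Q0 x y = dcoef2 P1 Q1 x y.
Hypothesis HdH : forall x y, in_disk x y ->
  pd2 0 H x y = P1 x y - P0 x y /\ pd2 1 H x y = Q1 x y - Q0 x y.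

(* Since [dH = beta1 - beta0], the [dt]-terms of [d alpha] cancel and [d alpha = eps omega]. *)
Lemma dform_alpha t x y : in_cyl t x y ->
  pd3 0 (interp_form eps P0 P1) t x y - pd3 1 (dt_coef eps H) t x y = 0 /\
  pd3 0 (interp_form eps Q0 Q1) t x y - pd3 2 (dt_coef eps H) t x y = 0 /\
  pd3 1 (interp_form eps Q0 Q1) t x y - pd3 2 (interp_form eps P0 P1) t x y
    = eps * dcoef2 P0 Q0 x y.
Proof.
  intros [_ Hin]. destruct (HdH x y Hin) as [H0 H1]. pose proof (Hcurl x y Hin) as Hc.
  unfold dcoef2 in *.
  rewrite !pd3_0_interp_form, pd3_1_dt_coef, pd3_2_dt_coef, pd3_1_interp_form, pd3_2_interp_form
    by now apply smooth2_ex_pd.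
  rewrite H0, H1. repeat split; try ring.
  replace (pd2 0 Q1 x y) with (pd2 0 Q0 x y - pd2 1 P0 x y + pd2 1 P1 x y) by lra. ring.
Qed.

Lemma alpha_contact_reeb :
  0 < eps -> (forall x y, in_disk x y -> 0 < dcoef2 P0 Q0 x y) ->
  (forall t x y, in_cyl t x y -> 0 < dt_coef eps H t x y) ->
  is_contact_cyl (dt_coef eps H) (interp_form eps P0 P1) (interp_form eps Q0 Q1) /\
  is_reeb_cyl (dt_coef eps H) (interp_form eps P0 P1) (interp_form eps Q0 Q1)
    (fun t x y => (/ dt_coef eps H t x y, 0, 0)).
Proof.
  intros Heps Homega Ha. apply contact_reeb_of_dform. intros t x y Hc.
  destruct (dform_alpha t x y Hc) as (HA & HB & HC). rewrite HC.
  repeat split; auto. apply Rmult_lt_0_compat; [exact Heps|apply Homega, Hc].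
Qed.

End Alpha.

Lemma difference_exact (P0 Q0 P1 Q1 : fun2) (d : R) :
  smooth2 P0 -> smooth2 Q0 -> smooth2 P1 -> smooth2 Q1 -> 0 < d <= 1 ->
  (forall x y, in_disk x y -> 1 - d < x ^ 2 + y ^ 2 -> P0 x y = P1 x y /\ Q0 x y = Q1 x y) ->
  (forall x y, in_disk x y -> dcoef2 P0 Q0 x y = dcoef2 P1 Q1 x y) ->
  exists H : fun2, smooth2 H /\
    (forall x y, in_disk x y -> pd2 0 H x y = P1 x y - P0 x y /\ pd2 1 H x y = Q1 x y - Q0 x y) /\
    (forall x y, 1 - d < x ^ 2 + y ^ 2 -> H x y = 0).
Proof.
  intros HP0 HQ0 HP1 HQ1 Hd Hbd Hcurl.
  apply closed_form_exact; auto using smooth2_minus.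
  - intros x y Hin. specialize (Hcurl x y Hin). unfold dcoef2 in Hcurl.
    rewrite !pd2_minus by now apply smooth2_ex_pd. lra.
  - intros x y Hin Hr. destruct (Hbd x y Hin Hr) as [-> ->]. split; ring.
Qed.

Theorem lemma3p10 (P0 Q0 P1 Q1 : fun2) :
  smooth2 P0 -> smooth2 Q0 -> smooth2 P1 -> smooth2 Q1 ->
  (exists d : R, d > 0 /\
     forall x y, in_disk x y -> 1 - d < x ^ 2 + y ^ 2 ->
       P0 x y = P1 x y /\ Q0 x y = Q1 x y) ->
  (forall x y, in_disk x y ->
     dcoef2 P0 Q0 x y = dcoef2 P1 Q1 x y /\ dcoef2 P0 Q0 x y > 0) ->
  exists (a b c : fun3) (Rv : R -> R -> R -> vec3) (eps : R),
    smooth3 a /\ smooth3 b /\ smooth3 c /\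
    is_contact_cyl a b c /\
    is_reeb_cyl a b c Rv /\
    eps > 0 /\
    (exists d : R, d > 0 /\
       forall t x y, in_cyl t x y -> t < -1 + d ->
         a t x y = 1 /\ b t x y = eps * P0 x y /\ c t x y = eps * Q0 x y) /\
    (exists d : R, d > 0 /\
       forall t x y, in_cyl t x y -> 1 - d < t ->
         a t x y = 1 /\ b t x y = eps * P1 x y /\ c t x y = eps * Q1 x y) /\
    (forall t x y, in_cyl t x y ->
       exists r : R, Rv t x y = (r, 0, 0)) /\
    (exists d : R, d > 0 /\
       forall t x y, in_cyl t x y -> 1 - d < x ^ 2 + y ^ 2 ->
         Rv t x y = (1, 0, 0)).
Proof.
  intros HP0 HQ0 HP1 HQ1 [d0 [Hd0 Hbd]] Hcurl.
  assert (Hclosed : forall x y, in_disk x y -> dcoef2 P0 Q0 x y = dcoef2 P1 Q1 x y)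
    by (intros; now apply Hcurl).
  assert (Homega : forall x y, in_disk x y -> 0 < dcoef2 P0 Q0 x y) by (intros; now apply Hcurl).
  set (d := Rmin d0 1).
  assert (Hd : 0 < d <= 1) by (split; [apply Rmin_pos; lra|apply Rmin_r]).
  destruct (difference_exact P0 Q0 P1 Q1 d) as (H & HH & HdH & HH0); auto.
  { intros x y Hin Hr. apply Hbd; [exact Hin|]. pose proof (Rmin_l d0 1) as Hdd0. fold d in Hdd0. lra. }
  destruct (dt_coef_pos_small H HH) as (eps & Heps & Ha).
  destruct (alpha_contact_reeb P0 Q0 P1 Q1 H eps) as [Hcontact Hreeb]; auto.
  exists (dt_coef eps H), (interp_form eps P0 P1), (interp_form eps Q0 Q1),
    (fun t x y => (/ dt_coef eps H t x y, 0, 0)), eps.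
  split; [now apply smooth3_dt_coef|]. split; [now apply smooth3_interp_form|].
  split; [now apply smooth3_interp_form|]. do 3 (split; [assumption|]).
  split; [exists (1/2); split; [lra|]; intros t x y _ Ht;
          rewrite dt_coef_ends, !interp_form_bottom by lra; auto|].
  split; [exists (1/2); split; [lra|]; intros t x y _ Ht;
          rewrite dt_coef_ends, !interp_form_top by lra; auto|].
  split; [intros; eexists; reflexivity|].
  exists d. split; [lra|]. intros t x y _ Hr. unfold dt_coef. rewrite HH0 by exact Hr.
  now rewrite Rmult_0_r, Rmult_0_r, Rplus_0_r, Rinv_1.
Qed.
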